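(* For $0\le v\le 1$ and $a,b>0$, $$L(a,b)\le A\left(L_v(a,b),L_{1-v}(a,b)\right)\le A(a,b)$$ and $$L(a,b)\le L\left(A_v(a,b),A_{1-v}(a,b)\right)\le A(a,b).$$
   Context: For $x,y>0$: $A(x,y):=\frac{x+y}{2}$, $A_v(x,y):=(1-v)x+vy$, and the logarithmic mean $L(x,y):=\frac{x-y}{\log x-\log y}$ for $x\neq y$, $L(x,x):=x$. For $0<v<1$ and $a\ne b$ the weighted logarithmic mean is $$L_v(a,b):=\frac{1}{\log a-\log b}\left(\frac{1-v}{v}(a-a^{1-v}b^v)+\frac{v}{1-v}(a^{1-v}b^v-b)\right),$$ with $L_v(a,a):=a$, and for the endpoint values (by continuity in $v$) $L_0(a,b):=a$, $L_1(a,b):=b$. Note $L_{1/2}(a,b)=L(a,b)$. *)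

From Stdlib Require Import Reals.
Open Scope R_scope.

Definition Amean (x y : R) : R := (x + y) / 2.

Definition Aw (v x y : R) : R := (1 - v) * x + v * y.

Definition Lmean (x y : R) : R :=
  if Req_EM_T x y then x else (x - y) / (ln x - ln y).

(* Weighted logarithmic mean L_v(a,b), 0 <= v <= 1, with
   L_v(a,a) = a, L_0(a,b) = a, L_1(a,b) = b (continuous extension). *)
Definition Lw (v a b : R) : R :=
  if Req_EM_T a b then a
  else if Req_EM_T v 0 then a
  else if Req_EM_T v 1 then b
  else (1 / (ln a - ln b)) *
       ((1 - v) / v * (a - Rpower a (1 - v) * Rpower b v)
        + v / (1 - v) * (Rpower a (1 - v) * Rpower b v - b)).

(* Everything rests on [L(x,y) (ln x - ln y) = x - y] and on star-shapedness: if [f 0 = 0]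
   and [f'] is nondecreasing on [[0,r)], then [f (l x) <= l f x] for [0 <= l <= 1].

   Second chain: with [c = A(a,b)] and [e = (a-b)/2] we have [A_v, A_(1-v) = c +- (1-2v) e]
   and [L(c+e, c-e) = e / artanh (e/c)], which decreases in [|e|] since artanh is
   star-shaped; [L <= A] is [x <= artanh x].

   First chain: with [G_v = a^(1-v) b^v], [L_v = (1-v) L(a,G_v) + v L(G_v,b)], so [L <= A] on
   each piece and the Heinz inequality [G_v + G_(1-v) <= a + b] give the upper bound.  In log
   coordinates [a = e^(m+s)], [b = e^(m-s)] the lower bound reduces to the star-shapedness
   [sinh (w s) <= w sinh s] of sinh, with [w = 1 - 2v]. *)

From Coquelicot Require Import Coquelicot.
From Stdlib Require Import Reals Lra Psatz.
Open Scope R_scope.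

Lemma nondecreasing_of_derive_nonneg (f df : R -> R) (lo hi : R) :
  (forall x, lo <= x < hi -> is_derive f x (df x)) ->
  (forall x, lo <= x < hi -> 0 <= df x) ->
  forall x y, lo <= x -> x <= y -> y < hi -> f x <= f y.
Proof.
intros Hd Hpos x y Hx Hxy Hy.
assert (Hd' : forall z, x <= z <= y -> is_derive f z (df z)) by (intros; apply Hd; lra).
destruct (MVT_gen f x y df) as [c [Hc Ec]]; rewrite Rmin_left, Rmax_right in * by lra.
- intros z Hz; apply Hd'; lra.
- intros z Hz. pose proof (proj1 (is_derive_Reals f z (df z)) (Hd' z Hz)) as Hz'.
  exact (derivable_continuous_pt f z (exist _ (df z) Hz')).
- assert (0 <= df c) by (apply Hpos; lra). nra.
Qed.

(* The auxiliary [l f(s) - f(l s)] vanishes at 0 and has derivative [l (f'(s) - f'(l s)) >= 0]. *)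
Lemma scale_le_of_derive_nondecreasing (f df : R -> R) (r : R) :
  (forall x, 0 <= x < r -> is_derive f x (df x)) ->
  (forall x y, 0 <= x -> x <= y -> y < r -> df x <= df y) ->
  f 0 = 0 ->
  forall l x, 0 <= l <= 1 -> 0 <= x < r -> f (l * x) <= l * f x.
Proof.
intros Hd Hmono H0 l x Hl Hx.
set (h := fun s => l * f s - f (l * s)).
assert (Hh : h 0 <= h x).
{ apply (nondecreasing_of_derive_nonneg h (fun s => l * df s - l * df (l * s)) 0 r);
    try lra.
  - intros s Hs.
    assert (Hcomp : is_derive (fun s => f (l * s)) s (l * df (l * s))).
    { apply (is_derive_comp f (fun s => l * s)); [apply Hd; nra | auto_derive; [easy | ring]]. }
    apply (is_derive_minus (fun s => l * f s) (fun s => f (l * s))); [|exact Hcomp].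
    now apply is_derive_scal, Hd.
  - intros s Hs. assert (df (l * s) <= df s) by (apply Hmono; nra). nra. }
unfold h in Hh. rewrite Rmult_0_r, H0 in Hh. lra.
Qed.

Lemma Lmean_diag (x : R) : Lmean x x = x.
Proof. unfold Lmean. now destruct (Req_EM_T x x). Qed.

Lemma ln_sub_neq0 (x y : R) : 0 < x -> 0 < y -> x <> y -> ln x - ln y <> 0.
Proof. intros Hx Hy Hxy E. apply Hxy, ln_inv; lra. Qed.

Lemma Lmean_mul_ln_sub (x y : R) : 0 < x -> 0 < y ->
  Lmean x y * (ln x - ln y) = x - y.
Proof.
intros Hx Hy. unfold Lmean. destruct (Req_EM_T x y) as [->|Hxy].
- ring.
- field. now apply ln_sub_neq0.
Qed.

Lemma Lmean_sym (x y : R) : 0 < x -> 0 < y -> Lmean x y = Lmean y x.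
Proof.
intros Hx Hy. unfold Lmean.
destruct (Req_EM_T x y) as [Exy|Hxy]; destruct (Req_EM_T y x); try congruence.
pose proof (ln_sub_neq0 x y Hx Hy Hxy). field. lra.
Qed.

Definition artanh (x : R) : R := (ln (1 + x) - ln (1 - x)) / 2.

Lemma artanh_0 : artanh 0 = 0.
Proof. unfold artanh. rewrite Rplus_0_r, Rminus_0_r. lra. Qed.

Lemma is_derive_artanh (x : R) : -1 < x < 1 -> is_derive artanh x (/ (1 - x ^ 2)).
Proof.
intros Hx. unfold artanh. auto_derive.
- split; lra.
- field. repeat split; nra.
Qed.

Lemma id_le_artanh (x : R) : 0 <= x < 1 -> x <= artanh x.
Proof.
intros Hx.
assert (Hincr : artanh 0 - 0 <= artanh x - x).
{ apply (nondecreasing_of_derive_nonneg (fun x => artanh x - x)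
           (fun x => / (1 - x ^ 2) - 1) 0 1); try lra.
  - intros s Hs. apply (is_derive_minus artanh (fun x => x)).
    + apply is_derive_artanh. lra.
    + apply (@is_derive_id R_AbsRing).
  - intros s Hs. assert (1 <= / (1 - s ^ 2)).
    { rewrite <- Rinv_1. apply Rinv_le_contravar; nra. }
    lra. }
rewrite artanh_0 in Hincr. lra.
Qed.

Lemma artanh_scale_le (l x : R) : 0 <= l <= 1 -> 0 <= x < 1 ->
  artanh (l * x) <= l * artanh x.
Proof.
apply (scale_le_of_derive_nondecreasing artanh (fun x => / (1 - x ^ 2)) 1).
- intros s Hs. apply is_derive_artanh. lra.
- intros s t Hs Hst Ht. apply Rinv_le_contravar; nra.
- exact artanh_0.
Qed.

Lemma Lmean_center_mul_artanh (c e : R) : 0 <= e < c ->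
  Lmean (c + e) (c - e) * artanh (e / c) = e.
Proof.
intros He.
assert (Hc : c + e = c * (1 + e / c) /\ c - e = c * (1 - e / c)).
{ split; field; lra. }
assert (Hx : 0 <= e / c < 1).
{ split; [apply Rdiv_le_0_compat; lra|]. apply (Rdiv_lt_1 e c); lra. }
assert (Hln : ln (c + e) - ln (c - e) = 2 * artanh (e / c)).
{ destruct Hc as [-> ->]. rewrite !ln_mult by lra. unfold artanh. lra. }
pose proof (Lmean_mul_ln_sub (c + e) (c - e) ltac:(lra) ltac:(lra)) as E.
rewrite Hln in E. lra.
Qed.

Lemma Lmean_center_le (c e : R) : 0 <= e < c -> Lmean (c + e) (c - e) <= c.
Proof.
intros He. destruct (Req_dec e 0) as [->|Hne].
- rewrite Rplus_0_r, Rminus_0_r, Lmean_diag. lra.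
- pose proof (Lmean_center_mul_artanh c e He) as E.
  assert (Hx : e / c * c = e) by (field; lra).
  assert (0 < e / c) by (apply Rdiv_lt_0_compat; lra).
  assert (e / c <= artanh (e / c)).
  { apply id_le_artanh. split; [lra|]. apply (Rdiv_lt_1 e c); lra. }
  nra.
Qed.

Lemma Lmean_center_abs (c e : R) : Rabs e < c ->
  Lmean (c + e) (c - e) = Lmean (c + Rabs e) (c - Rabs e).
Proof.
intros He. unfold Rabs in *. destruct (Rcase_abs e); [|reflexivity].
rewrite Lmean_sym by lra. f_equal; ring.
Qed.

Lemma Lmean_le_Amean (x y : R) : 0 < x -> 0 < y -> Lmean x y <= Amean x y.
Proof.
intros Hx Hy. set (c := Amean x y). set (e := (x - y) / 2).
assert (He : Rabs e < c) by (unfold c, e, Amean, Rabs; destruct Rcase_abs; lra).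
replace x with (c + e) by (unfold c, e, Amean; field).
replace y with (c - e) at 1 by (unfold c, e, Amean; field).
rewrite Lmean_center_abs by exact He.
apply Lmean_center_le. split; [apply Rabs_pos | exact He].
Qed.

Lemma Lmean_center_antitone (c e1 e2 : R) : 0 <= e1 -> e1 <= e2 -> e2 < c ->
  Lmean (c + e2) (c - e2) <= Lmean (c + e1) (c - e1).
Proof.
intros He1 He12 He2. destruct (Req_dec e1 0) as [->|Hne].
- rewrite Rplus_0_r, Rminus_0_r, Lmean_diag. apply Lmean_center_le. lra.
- set (l := e1 / e2). set (x := e2 / c).
  assert (Hl : 0 <= l <= 1).
  { split; [apply Rdiv_le_0_compat; lra|]. apply (Rdiv_le_1 e1 e2); lra. }
  assert (Hx : 0 <= x < 1).
  { split; [apply Rdiv_le_0_compat; lra|]. apply (Rdiv_lt_1 e2 c); lra. }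
  assert (Hlx : e1 / c = l * x) by (unfold l, x; field; lra).
  pose proof (Lmean_center_mul_artanh c e1 ltac:(lra)) as E1.
  pose proof (Lmean_center_mul_artanh c e2 ltac:(lra)) as E2.
  pose proof (artanh_scale_le l x Hl Hx) as Hstar.
  rewrite Hlx in E1. fold x in E2.
  assert (Hpos : 0 < l * x) by (rewrite <- Hlx; apply Rdiv_lt_0_compat; lra).
  assert (l * x <= artanh (l * x)) by (apply id_le_artanh; nra).
  assert (He1l : e1 = l * e2) by (unfold l; field; lra).
  set (L1 := Lmean (c + e1) (c - e1)) in *. set (L2 := Lmean (c + e2) (c - e2)) in *.
  assert (HL2 : 0 <= L2).
  { assert (x <= artanh x) by (apply id_le_artanh; lra). nra. }
  assert (Hcmp : L2 * artanh (l * x) <= L1 * artanh (l * x)) by nra.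
  apply Rmult_le_reg_r with (artanh (l * x)); lra.
Qed.

Lemma Lmean_center_antitone_abs (c e1 e2 : R) : Rabs e1 <= Rabs e2 -> Rabs e2 < c ->
  Lmean (c + e2) (c - e2) <= Lmean (c + e1) (c - e1).
Proof.
intros H12 H2.
rewrite (Lmean_center_abs c e1), (Lmean_center_abs c e2) by lra.
apply Lmean_center_antitone; auto using Rabs_pos.
Qed.

Lemma Lmean_Aw_bounds (v a b : R) : 0 <= v <= 1 -> 0 < a -> 0 < b ->
  Lmean a b <= Lmean (Aw v a b) (Aw (1 - v) a b) <= Amean a b.
Proof.
intros Hv Ha Hb.
set (c := Amean a b). set (e := (a - b) / 2). set (w := 1 - 2 * v).
assert (Hw : Rabs (w * e) <= Rabs e).
{ rewrite Rabs_mult. assert (Rabs w <= 1) by (unfold w, Rabs; destruct Rcase_abs; lra).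
  pose proof (Rabs_pos e). nra. }
assert (He : Rabs e < c) by (unfold c, e, Amean, Rabs; destruct Rcase_abs; lra).
assert (Hwe : 0 < c + w * e /\ 0 < c - w * e)
  by (revert Hw He; unfold Rabs; destruct Rcase_abs; destruct Rcase_abs; lra).
replace (Aw v a b) with (c + w * e) by (unfold Aw, c, e, w, Amean; field).
replace (Aw (1 - v) a b) with (c - w * e) by (unfold Aw, c, e, w, Amean; field).
split.
- replace a with (c + e) at 1 by (unfold c, e, Amean; field).
  replace b with (c - e) at 1 by (unfold c, e, Amean; field).
  now apply Lmean_center_antitone_abs.
- replace c with (Amean (c + w * e) (c - w * e)) at 3 by (unfold Amean; field).
  apply Lmean_le_Amean; lra.
Qed.

Lemma sinh_opp (x : R) : sinh (- x) = - sinh x.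
Proof. unfold sinh. rewrite Ropp_involutive. lra. Qed.

Lemma sinh_nonneg (x : R) : 0 <= x -> 0 <= sinh x.
Proof.
intros Hx. rewrite <- sinh_0. destruct (Req_dec x 0) as [->|Hne]; [lra|].
left. apply sinh_lt. lra.
Qed.

Lemma cosh_le (x y : R) : 0 <= x -> x <= y -> cosh x <= cosh y.
Proof.
intros Hx Hxy. apply (nondecreasing_of_derive_nonneg cosh sinh 0 (y + 1)); try lra.
- intros s _. apply is_derive_Reals, derivable_pt_lim_cosh.
- intros s Hs. apply sinh_nonneg. lra.
Qed.

Lemma sinh_scale_le (l x : R) : 0 <= l <= 1 -> 0 <= x -> sinh (l * x) <= l * sinh x.
Proof.
intros Hl Hx. apply (scale_le_of_derive_nondecreasing sinh cosh (x + 1)); try lra.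
- intros s _. apply is_derive_Reals, derivable_pt_lim_sinh.
- intros s t Hs Hst _. now apply cosh_le.
- exact sinh_0.
Qed.

Lemma sinh_scale_sign (w s : R) : -1 <= w <= 1 ->
  0 <= w * s * (w * sinh s - sinh (w * s)).
Proof.
assert (Hpos : forall l t, 0 <= l <= 1 -> 0 <= t * (l * sinh t - sinh (l * t))).
{ intros l t Hl. destruct (Rle_dec 0 t) as [Ht|Ht].
  - pose proof (sinh_scale_le l t Hl Ht). nra.
  - pose proof (sinh_scale_le l (- t) Hl ltac:(lra)) as Hneg.
    rewrite <- Ropp_mult_distr_r, !sinh_opp in Hneg. nra. }
intros Hw. destruct (Rle_dec 0 w) as [Hw0|Hw0].
- pose proof (Hpos w s ltac:(lra)). nra.
- pose proof (Hpos (- w) s ltac:(lra)) as Hneg.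
  replace (- w * s) with (- (w * s)) in Hneg by ring. rewrite sinh_opp in Hneg. nra.
Qed.

Definition Gw (v a b : R) : R := Rpower a (1 - v) * Rpower b v.

Lemma Gw_exp (v a b : R) : Gw v a b = exp ((1 - v) * ln a + v * ln b).
Proof. unfold Gw, Rpower. now rewrite exp_plus. Qed.

Lemma Gw_pos (v a b : R) : 0 < Gw v a b.
Proof. rewrite Gw_exp. apply exp_pos. Qed.

Lemma ln_Gw (v a b : R) : ln (Gw v a b) = (1 - v) * ln a + v * ln b.
Proof. rewrite Gw_exp. apply ln_exp. Qed.

Lemma Gw_diag (v a : R) : 0 < a -> Gw v a a = a.
Proof.
intros Ha. unfold Gw. rewrite <- Rpower_plus.
replace (1 - v + v) with 1 by ring. now apply Rpower_1.
Qed.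

(* Heinz: [a + b - G_v - G_(1-v) = (a^(1-v) - b^(1-v)) (a^v - b^v)], a product of two factors of equal sign. *)
Lemma Gw_add_Gw_le (v a b : R) : 0 <= v <= 1 -> 0 < a -> 0 < b ->
  Gw v a b + Gw (1 - v) a b <= a + b.
Proof.
intros Hv Ha Hb.
assert (Hfactor : a + b - (Gw v a b + Gw (1 - v) a b)
                  = (Rpower a (1 - v) - Rpower b (1 - v)) * (Rpower a v - Rpower b v)).
{ assert (Hsplit : forall x, 0 < x -> x = Rpower x (1 - v) * Rpower x v).
  { intros x Hx. rewrite <- Rpower_plus. replace (1 - v + v) with 1 by ring.
    now rewrite Rpower_1. }
  unfold Gw. replace (1 - (1 - v)) with v by ring.
  rewrite (Hsplit a Ha) at 1. rewrite (Hsplit b Hb) at 1. ring. }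
assert (0 <= (Rpower a (1 - v) - Rpower b (1 - v)) * (Rpower a v - Rpower b v)).
{ destruct (Rle_dec a b).
  - pose proof (Rle_Rpower_l a b (1 - v) ltac:(lra) ltac:(lra)).
    pose proof (Rle_Rpower_l a b v ltac:(lra) ltac:(lra)). nra.
  - pose proof (Rle_Rpower_l b a (1 - v) ltac:(lra) ltac:(lra)).
    pose proof (Rle_Rpower_l b a v ltac:(lra) ltac:(lra)). nra. }
lra.
Qed.

(* In log coordinates [a = e^(m+s)], [b = e^(m-s)] one has [a - b = 2 e^m sinh s] and
   [G_v - G_(1-v) = 2 e^m sinh (w s)] with [w = 1 - 2 v]. *)
Lemma Gw_skew_sign (v a b : R) : 0 <= v <= 1 -> 0 < a -> 0 < b ->
  0 <= (1 - 2 * v) * (ln a - ln b)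
       * ((1 - 2 * v) * (a - b) - (Gw v a b - Gw (1 - v) a b)).
Proof.
intros Hv Ha Hb.
set (w := 1 - 2 * v). set (m := (ln a + ln b) / 2). set (s := (ln a - ln b) / 2).
assert (Hexp : forall t, exp (m + t) - exp (m - t) = 2 * exp m * sinh t).
{ intros t. unfold sinh, Rminus. rewrite !exp_plus. lra. }
assert (Eab : a - b = 2 * exp m * sinh s).
{ rewrite <- Hexp, <- (exp_ln a Ha) at 1. rewrite <- (exp_ln b Hb) at 1.
  unfold m, s. f_equal; f_equal; field. }
assert (EG : Gw v a b - Gw (1 - v) a b = 2 * exp m * sinh (w * s)).
{ rewrite <- Hexp, !Gw_exp. unfold m, s, w. f_equal; f_equal; field. }
rewrite Eab, EG.
replace (ln a - ln b) with (2 * s) by (unfold s; field).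
pose proof (sinh_scale_sign w s ltac:(unfold w; lra)).
pose proof (exp_pos m). nra.
Qed.

Lemma Lw_0 (a b : R) : Lw 0 a b = a.
Proof. unfold Lw. destruct (Req_EM_T a b); [reflexivity|]. now destruct (Req_EM_T 0 0). Qed.

Lemma Lw_1 (a b : R) : Lw 1 a b = b.
Proof.
unfold Lw. destruct (Req_EM_T a b); [assumption|].
destruct (Req_EM_T 1 0); [lra|]. now destruct (Req_EM_T 1 1).
Qed.

Lemma Lw_mul_ln_sub (v a b : R) : 0 < v < 1 -> 0 < a -> 0 < b -> a <> b ->
  Lw v a b * (ln a - ln b)
  = (1 - v) / v * (a - Gw v a b) + v / (1 - v) * (Gw v a b - b).
Proof.
intros Hv Ha Hb Hab. pose proof (ln_sub_neq0 a b Ha Hb Hab).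
unfold Lw, Gw. destruct (Req_EM_T a b); [contradiction|].
destruct (Req_EM_T v 0); [lra|]. destruct (Req_EM_T v 1); [lra|].
field. lra.
Qed.

Lemma Lw_split (v a b : R) : 0 <= v <= 1 -> 0 < a -> 0 < b ->
  Lw v a b = (1 - v) * Lmean a (Gw v a b) + v * Lmean (Gw v a b) b.
Proof.
intros Hv Ha Hb.
destruct (Req_dec a b) as [<-|Hab].
{ unfold Lw. destruct (Req_EM_T a a); [|congruence].
  rewrite Gw_diag, Lmean_diag by exact Ha. ring. }
destruct (Req_dec v 0) as [->|Hv0].
{ rewrite Lw_0. unfold Gw. rewrite Rminus_0_r, Rpower_1, Rpower_O, Rmult_1_r, Lmean_diag
    by assumption. ring. }
destruct (Req_dec v 1) as [->|Hv1].
{ rewrite Lw_1. unfold Gw. rewrite Rminus_diag, Rpower_1, Rpower_O, Rmult_1_l, Lmean_diag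
    by assumption. ring. }
pose proof (ln_sub_neq0 a b Ha Hb Hab) as Hd.
apply Rmult_eq_reg_r with (ln a - ln b); [|exact Hd].
rewrite Lw_mul_ln_sub by (lra || assumption).
pose proof (Lmean_mul_ln_sub a (Gw v a b) Ha (Gw_pos v a b)) as E1.
pose proof (Lmean_mul_ln_sub (Gw v a b) b (Gw_pos v a b) Hb) as E2.
rewrite ln_Gw in E1, E2. rewrite <- E1, <- E2. field. lra.
Qed.

Lemma Amean_Lw_le (v a b : R) : 0 <= v <= 1 -> 0 < a -> 0 < b ->
  Amean (Lw v a b) (Lw (1 - v) a b) <= Amean a b.
Proof.
intros Hv Ha Hb.
rewrite (Lw_split v), (Lw_split (1 - v)) by (lra || assumption).
pose proof (Gw_pos v a b). pose proof (Gw_pos (1 - v) a b).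
pose proof (Lmean_le_Amean a (Gw v a b) Ha ltac:(lra)).
pose proof (Lmean_le_Amean (Gw v a b) b ltac:(lra) Hb).
pose proof (Lmean_le_Amean a (Gw (1 - v) a b) Ha ltac:(lra)).
pose proof (Lmean_le_Amean (Gw (1 - v) a b) b ltac:(lra) Hb).
pose proof (Gw_add_Gw_le v a b Hv Ha Hb).
unfold Amean in *. nra.
Qed.

Lemma Lmean_le_Amean_Lw_interior (v a b : R) : 0 < v < 1 -> 0 < a -> 0 < b -> a <> b ->
  Lmean a b <= Amean (Lw v a b) (Lw (1 - v) a b).
Proof.
intros Hv Ha Hb Hab.
set (d := ln a - ln b). pose proof (ln_sub_neq0 a b Ha Hb Hab) as Hd. fold d in Hd.
pose proof (Lw_mul_ln_sub v a b Hv Ha Hb Hab) as Ev.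
pose proof (Lw_mul_ln_sub (1 - v) a b ltac:(lra) Ha Hb Hab) as E1v.
pose proof (Lmean_mul_ln_sub a b Ha Hb) as EL.
pose proof (Gw_skew_sign v a b ltac:(lra) Ha Hb) as Hskew.
fold d in Ev, E1v, EL, Hskew.
assert (Hid : d * d * (Amean (Lw v a b) (Lw (1 - v) a b) - Lmean a b)
   = (1 - 2 * v) * d * ((1 - 2 * v) * (a - b) - (Gw v a b - Gw (1 - v) a b))
     / (2 * v * (1 - v))).
{ replace (d * d * (Amean (Lw v a b) (Lw (1 - v) a b) - Lmean a b))
    with (d * ((Lw v a b * d + Lw (1 - v) a b * d) / 2 - Lmean a b * d))
    by (unfold Amean; field).
  rewrite Ev, E1v, EL. field. lra. }
assert (0 <= d * d * (Amean (Lw v a b) (Lw (1 - v) a b) - Lmean a b)).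
{ rewrite Hid. apply Rdiv_le_0_compat; [exact Hskew | nra]. }
assert (0 < d * d) by nra.
nra.
Qed.

Lemma Lmean_le_Amean_Lw (v a b : R) : 0 <= v <= 1 -> 0 < a -> 0 < b ->
  Lmean a b <= Amean (Lw v a b) (Lw (1 - v) a b).
Proof.
intros Hv Ha Hb.
destruct (Req_dec a b) as [<-|Hab].
{ unfold Lw, Amean. destruct (Req_EM_T a a); [|congruence]. rewrite Lmean_diag. lra. }
destruct (Req_dec v 0) as [->|Hv0].
{ rewrite Rminus_0_r, Lw_0, Lw_1. now apply Lmean_le_Amean. }
destruct (Req_dec v 1) as [->|Hv1].
{ rewrite Rminus_diag, Lw_0, Lw_1. pose proof (Lmean_le_Amean a b Ha Hb).
  unfold Amean in *. lra. }
apply Lmean_le_Amean_Lw_interior; lra || assumption.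
Qed.

Theorem theorem2p10 (v a b : R) :
  0 <= v <= 1 -> 0 < a -> 0 < b ->
  (Lmean a b <= Amean (Lw v a b) (Lw (1 - v) a b) <= Amean a b) /\
  (Lmean a b <= Lmean (Aw v a b) (Aw (1 - v) a b) <= Amean a b).
Proof.
intros Hv Ha Hb. split.
- split; [apply Lmean_le_Amean_Lw | apply Amean_Lw_le]; assumption.
- now apply Lmean_Aw_bounds.
Qed.
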